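(* Let $k\in\mathbb N$ with $k\geq 3$. Then: (i) $f_{i,j}(n)+1=f_{i,j-1}(n)$ for all $n\in\mathbb N$ and all integers $i,j$ with $k-3\leq i\leq k-2$ and $-F(i+1)\geq j\geq 2-F(k)$; (ii) $f_{k-3,1-F(k)}(a(n))+1=f_{k-2,-F(k-1)}(n)$ for all $n\in\mathbb N$; (iii) $f_{k-3,1-F(k)}(b(n))+1=f_{k-3,-F(k-2)}(b(n)+1)$ for all $n\in\mathbb N$; (iv) $f_{k-2,1-F(k)}(n)+1=f_{k-3,-F(k-2)}(a(n)+1)$ for all $n\in\mathbb N$.
   Context: $\mathbb N=\{1,2,\dots\}$, $\varphi=\frac{1+\sqrt5}{2}$, $a(n)=\lfloor n\varphi\rfloor$, $b(n)=\lfloor n\varphi^2\rfloor$. $F$ is the Fibonacci sequence with $F(0)=0$, $F(1)=F(2)=1$, $F(n)=F(n-1)+F(n-2)$. For $i\in\mathbb Z^{\geq 0}$ and $j\in\mathbb Z$, $f_{i,j}(n)=F(i+1)a(n)+F(i)n-j$ for $n\in\mathbb N$ (the sequences $f_{i,j}$ are only defined for $i\ge 0$). *)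

From Stdlib Require Import Reals ZArith Lia Lra.
Open Scope Z_scope.

(* floor on the reals: Int_part r = up r - 1 satisfies Int_part r <= r < Int_part r + 1 *)
Definition floorR (r : R) : Z := Int_part r.

Definition phi : R := ((1 + sqrt 5) / 2)%R.

Definition a (n : Z) : Z := floorR (IZR n * phi)%R.
Definition b (n : Z) : Z := floorR (IZR n * (phi * phi))%R.

Fixpoint F (n : nat) : Z :=
  match n with
  | O => 0
  | S m => match m with
           | O => 1
           | S p => F m + F p
           end
  end.

Definition fij (i : nat) (j : Z) (n : Z) : Z := F (i + 1) * a n + F i * n - j.

(** Write [t = n phi - a(n)], so [0 <= t < 1].  Since [phi^2 = phi + 1],
    [a(n) phi = a(n) + n - t (phi - 1)], and as [1 < phi < 2] the floors of
    [a(n) phi], [(a(n) + 1) phi], [b(n) phi] and [(b(n) + 1) phi] can be read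
    off from the position of [t].  Only [a(a(n))] needs [t > 0], i.e. that
    [n phi] is not an integer: a positive solution of [m^2 = m n + n^2] would
    descend along [(m, n) |-> (n, m - n)] forever.  Parts (ii)-(iv) then
    reduce to the Fibonacci recurrence, and part (i) is immediate. *)

From Stdlib Require Import Reals ZArith Lia Lra.
Open Scope Z_scope.

Lemma floorR_spec (r : R) : (IZR (floorR r) <= r < IZR (floorR r) + 1)%R.
Proof. unfold floorR. destruct (base_Int_part r). lra. Qed.

Lemma floorR_unique (r : R) (z : Z) : (IZR z <= r < IZR z + 1)%R -> floorR r = z.
Proof. intros Hz. symmetry. apply Int_part_spec. lra. Qed.

Lemma phi_pos : (0 < phi)%R.
Proof. unfold phi. pose proof (sqrt_pos 5). lra. Qed.

Lemma phi_sq : (phi * phi = phi + 1)%R.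
Proof. unfold phi. pose proof (sqrt_sqrt 5 ltac:(lra)). nra. Qed.

Lemma phi_bounds : (1 < phi < 2)%R.
Proof. pose proof phi_pos. pose proof phi_sq. split; nra. Qed.

Lemma golden_eq_no_pos_solution (m n : Z) : 0 < n -> 0 < m -> m * m <> m * n + n * n.
Proof.
  intros Hn. assert (Hn0 : 0 <= n) by lia. revert m Hn. pattern n.
  apply Z_lt_induction; [clear n Hn0 | exact Hn0].
  intros n IH m Hn Hm Heq.
  assert (Hmn : n < m < 2 * n) by nia.
  apply (IH (m - n) ltac:(lia) n); [lia | lia | nia].
Qed.

Lemma mul_phi_not_integer (n m : Z) : 0 < n -> (IZR n * phi <> IZR m)%R.
Proof.
  intros Hn Heq. pose proof phi_pos. pose proof phi_sq.
  assert (Hn' : (0 < IZR n)%R) by (apply IZR_lt; exact Hn).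
  assert (Hm : 0 < m) by (apply lt_IZR; rewrite <- Heq; nra).
  apply (golden_eq_no_pos_solution m n Hn Hm), eq_IZR.
  rewrite plus_IZR, !mult_IZR, <- Heq.
  replace (IZR n * phi * (IZR n * phi))%R with (IZR n * IZR n * (phi * phi))%R by ring.
  rewrite phi_sq. ring.
Qed.

Lemma a_frac_bounds (n : Z) : (0 <= IZR n * phi - IZR (a n) < 1)%R.
Proof. pose proof (floorR_spec (IZR n * phi)). unfold a. lra. Qed.

Lemma a_frac_pos (n : Z) : 0 < n -> (0 < IZR n * phi - IZR (a n))%R.
Proof.
  intros Hn. pose proof (a_frac_bounds n).
  pose proof (mul_phi_not_integer n (a n) Hn). lra.
Qed.

Lemma a_mul_phi (n : Z) :
  (IZR (a n) * phi = IZR (a n + n) - (IZR n * phi - IZR (a n)) * (phi - 1))%R.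
Proof.
  rewrite plus_IZR.
  replace (IZR (a n) + IZR n - (IZR n * phi - IZR (a n)) * (phi - 1))%R
    with (IZR (a n) * phi + IZR n * (phi + 1 - phi * phi))%R by ring.
  rewrite phi_sq. ring.
Qed.

Lemma b_eq_add_a (n : Z) : b n = n + a n.
Proof.
  pose proof (a_frac_bounds n). unfold b. apply floorR_unique.
  rewrite phi_sq, plus_IZR. lra.
Qed.

Lemma a_a (n : Z) : 0 < n -> a (a n) = a n + n - 1.
Proof.
  intros Hn. pose proof (a_frac_bounds n). pose proof (a_frac_pos n Hn).
  pose proof phi_bounds.
  unfold a at 1. apply floorR_unique.
  rewrite a_mul_phi, minus_IZR. nra.
Qed.

Lemma a_a_succ (n : Z) : a (a n + 1) = a n + n + 1.
Proof.
  pose proof (a_frac_bounds n). pose proof phi_bounds.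
  unfold a at 1. apply floorR_unique.
  pose proof (a_mul_phi n). rewrite !plus_IZR in *. nra.
Qed.

Lemma a_b (n : Z) : a (b n) = n + 2 * a n.
Proof.
  pose proof (a_frac_bounds n). pose proof phi_bounds.
  rewrite b_eq_add_a. unfold a at 1. apply floorR_unique.
  pose proof (a_mul_phi n). rewrite !plus_IZR, mult_IZR in *. nra.
Qed.

Lemma a_b_succ (n : Z) : a (b n + 1) = a (b n) + 1.
Proof.
  pose proof (a_frac_bounds n). pose proof phi_bounds.
  rewrite a_b, b_eq_add_a. unfold a at 1. apply floorR_unique.
  pose proof (a_mul_phi n). rewrite !plus_IZR, mult_IZR in *. nra.
Qed.

Lemma F_SS (i : nat) : F (S (S i)) = F (S i) + F i.
Proof. reflexivity. Qed.

Ltac fib_unfold := unfold fij; rewrite ?Nat.add_succ_r, ?Nat.add_0_r, ?F_SS.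

Lemma fij_add1 (i : nat) (j n : Z) : fij i j n + 1 = fij i (j - 1) n.
Proof. unfold fij. ring. Qed.

Lemma fij_a (i : nat) (n : Z) : 0 < n ->
  fij i (1 - F (i + 3)) (a n) + 1 = fij (i + 1) (- F (i + 2)) n.
Proof. intros Hn. fib_unfold. rewrite a_a by exact Hn. ring. Qed.

Lemma fij_b (i : nat) (n : Z) :
  fij i (1 - F (i + 3)) (b n) + 1 = fij i (- F (i + 1)) (b n + 1).
Proof. fib_unfold. rewrite a_b_succ. ring. Qed.

Lemma fij_a_succ (i : nat) (n : Z) :
  fij (i + 1) (1 - F (i + 3)) n + 1 = fij i (- F (i + 1)) (a n + 1).
Proof. fib_unfold. rewrite a_a_succ. ring. Qed.

Theorem theorem3p8 (k : nat) (hk : (3 <= k)%nat) :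
  (forall (n : Z) (i : nat) (j : Z), 1 <= n ->
     (k - 3 <= i <= k - 2)%nat ->
     2 - F k <= j <= - F (i + 1) ->
     fij i j n + 1 = fij i (j - 1) n) /\
  (forall n : Z, 1 <= n ->
     fij (k - 3) (1 - F k) (a n) + 1 = fij (k - 2) (- F (k - 1)) n) /\
  (forall n : Z, 1 <= n ->
     fij (k - 3) (1 - F k) (b n) + 1 = fij (k - 3) (- F (k - 2)) (b n + 1)) /\
  (forall n : Z, 1 <= n ->
     fij (k - 2) (1 - F k) n + 1 = fij (k - 3) (- F (k - 2)) (a n + 1)).
Proof.
  destruct (Nat.le_exists_sub 3 k hk) as [i [-> _]].
  replace (i + 3 - 3)%nat with i by lia.
  replace (i + 3 - 2)%nat with (i + 1)%nat by lia.
  replace (i + 3 - 1)%nat with (i + 2)%nat by lia.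
  split; [|split; [|split]]; intros n.
  - intros i' j _ _ _. apply fij_add1.
  - intros Hn. apply fij_a. lia.
  - intros _. apply fij_b.
  - intros _. apply fij_a_succ.
Qed.
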